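(* Let $(f_n)_{n\ge 0}$ be a sequence of positive real numbers such that $\{f_n/f_{n-1}\}_{n\ge1}$ is decreasing, and let $f(a,x)=\sum_{n=0}^{\infty} f_n\frac{(a)_n}{n!}x^n$. Then for $b>a>0$, $\delta>0$ and $x>0$, \[ \frac{\Gamma(a+\delta)\Gamma(b)}{\Gamma(b+\delta)\Gamma(a)}<\frac{f(b+\delta,x)f(a,x)}{f(a+\delta,x)f(b,x)}<1. \]
   Context: $(a)_n=a(a+1)\cdots(a+n-1)$ is the Pochhammer symbol; $\Gamma$ is Euler's gamma function. The inequality is asserted for $x>0$ at which the series converge. *)

From Stdlib Require Import Reals.
From Coquelicot Require Import Coquelicot.
Open Scope R_scope.

Fixpoint poch (a : R) (n : nat) : R :=
  match n with
  | O => 1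
  | S m => poch a m * (a + INR m)
  end.

Definition Gamma (s : R) : R :=
  RInt_gen (fun t => Rpower t (s - 1) * exp (- t))
           (at_right 0) (Rbar_locally p_infty).

Definition fterm (fs : nat -> R) (a x : R) (n : nat) : R :=
  fs n * poch a n / INR (Factorial.fact n) * x ^ n.

Definition fser (fs : nat -> R) (a x : R) : R := Series (fterm fs a x).

(* Write [f(s)] for [f(s, x)] and [w_n = f_n (a)_n / n! x^n], so that [f(a) = sum w_n] and
   [f(b) = sum w_n (b)_n / (a)_n].  Both inequalities come from Chebyshev's sum inequality
   for the weight [w] and the increasing sequence [(b)_n / (a)_n].

   Upper bound: by Vandermonde's identity, [f(s + delta) = sum_j (delta)_j / j! x^j F_j(s)],
   where [F_j(s)] is [f(s)] with coefficients [f_(j+l)] in place of [f_l].  Since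
   [f_(j+l) / f_l] decreases in [l], Chebyshev gives [F_j(b) f(a) < F_j(a) f(b)] for [j >= 1],
   with equality at [j = 0] because [F_0 = f].

   Lower bound: with [A(s) = Gamma(s + delta) / Gamma(s)] one has
   [(a + delta)_n = (a)_n A(a + n) / A(a)], and [A(a + n)] increases in [n].  Chebyshev bounds
   [A(a) f(a + delta) f(b)] by [f(a) sum_n w_n (b)_n / (a)_n A(a + n)], and log-convexity of
   Gamma gives [A(a + n) <= A(b + n)], so that sum is at most [A(b) f(b + delta)]. *)

From Stdlib Require Import Reals Lra Lia Psatz Classical Wf_nat.
From Coquelicot Require Import Coquelicot.
Open Scope R_scope.

Lemma exp_le_compat x y : x <= y -> exp x <= exp y.
Proof. intros [H | ->]; [left; now apply exp_increasing | lra]. Qed.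

Lemma ln_le_sub_1 y : 0 < y -> ln y <= y - 1.
Proof. intros Hy. generalize (exp_ineq1_le (ln y)). rewrite exp_ln; lra. Qed.

Lemma exp_convex l p q : 0 < l < 1 ->
  exp (l * p + (1 - l) * q) <= l * exp p + (1 - l) * exp q.
Proof.
  intros Hl. set (m := l * p + (1 - l) * q).
  (* tangent line of exp at m, applied at p and q *)
  assert (Ep : exp p = exp m * exp (p - m)) by (rewrite <- exp_plus; f_equal; ring).
  assert (Eq : exp q = exp m * exp (q - m)) by (rewrite <- exp_plus; f_equal; ring).
  generalize (exp_ineq1_le (p - m)) (exp_ineq1_le (q - m)) (exp_pos m); intros Hp Hq Hm.
  rewrite Ep, Eq.
  assert (l * (exp m * (1 + (p - m))) + (1 - l) * (exp m * (1 + (q - m))) = exp m)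
    by (unfold m; ring).
  assert (l * (exp m * exp (p - m)) >= l * (exp m * (1 + (p - m))))
    by (apply Rle_ge, Rmult_le_compat_l, Rmult_le_compat_l; lra).
  assert ((1 - l) * (exp m * exp (q - m)) >= (1 - l) * (exp m * (1 + (q - m))))
    by (apply Rle_ge, Rmult_le_compat_l, Rmult_le_compat_l; lra).
  lra.
Qed.

Lemma Rdiv_lt_cross p1 q1 p2 q2 : 0 < q1 -> 0 < q2 -> p1 * q2 < p2 * q1 -> p1 / q1 < p2 / q2.
Proof.
  intros Hq1 Hq2 H. apply Rmult_lt_reg_r with (q1 * q2); [nra|].
  replace (p1 / q1 * (q1 * q2)) with (p1 * q2) by (field; lra).
  replace (p2 / q2 * (q1 * q2)) with (p2 * q1) by (field; lra).
  exact H.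
Qed.

(** * Euler's Gamma function *)

Ltac continuity_by_derive :=
  apply (@ex_derive_continuous R_AbsRing R_NormedModule); auto_derive; lra.

Lemma RInt_antiderivative (F f : R -> R) u v : u <= v ->
  (forall t, u <= t <= v -> is_derive F t (f t)) ->
  (forall t, u <= t <= v -> continuous f t) -> RInt f u v = F v - F u.
Proof.
  intros Huv HF Hf. apply is_RInt_unique.
  apply (is_RInt_derive F f); rewrite Rmin_left, Rmax_right; auto.
Qed.

Lemma ex_RInt_continuous_R (f : R -> R) u v : u <= v ->
  (forall t, u <= t <= v -> continuous f t) -> ex_RInt f u v.
Proof.
  intros Huv Hf. apply (@ex_RInt_continuous R_CompleteNormedModule).
  rewrite Rmin_left, Rmax_right; auto.
Qed.

Definition Gamma_integrand (s t : R) : R := Rpower t (s - 1) * exp (- t).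

Lemma Gamma_integrand_pos s t : 0 < Gamma_integrand s t.
Proof. apply Rmult_lt_0_compat; apply exp_pos. Qed.

Lemma ex_RInt_Gamma_integrand s u v : 0 < u -> u <= v -> ex_RInt (Gamma_integrand s) u v.
Proof.
  intros Hu Huv. apply ex_RInt_continuous_R; auto.
  intros t Ht. unfold Gamma_integrand, Rpower. continuity_by_derive.
Qed.

Lemma RInt_Gamma_integrand_widen s u' u v v' : 0 < u' -> u' <= u -> u <= v -> v <= v' ->
  RInt (Gamma_integrand s) u v <= RInt (Gamma_integrand s) u' v'.
Proof.
  intros Hu' Hu'u Huv Hvv'.
  assert (Hge0 : forall p q, u' <= p -> p <= q -> 0 <= RInt (Gamma_integrand s) p q).
  { intros p q Hp Hpq. apply RInt_ge_0; auto.
    - apply ex_RInt_Gamma_integrand; lra.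
    - intros; left; apply Gamma_integrand_pos. }
  rewrite <- (RInt_Chasles (Gamma_integrand s) u' u v') by (apply ex_RInt_Gamma_integrand; lra).
  rewrite <- (RInt_Chasles (Gamma_integrand s) u v v') by (apply ex_RInt_Gamma_integrand; lra).
  generalize (Hge0 u' u (Rle_refl _) Hu'u) (Hge0 v v' ltac:(lra) Hvv').
  change plus with Rplus. lra.
Qed.

(* the shape [c ln(2c) - c] is the maximum of [c ln t - t/2] *)
Lemma Gamma_integrand_tail_le e c t : 0 < c -> e <= c -> 1 <= t ->
  exp (e * ln t) * exp (- t) <= exp (c * ln (2 * c) - c) * exp (- (t / 2)).
Proof.
  intros Hc Hec Ht. rewrite <- !exp_plus. apply exp_le_compat.
  assert (Hln : 0 <= ln t) by (rewrite <- ln_1; apply ln_le; lra).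
  assert (Hq : 0 < t / (2 * c)) by (apply Rdiv_lt_0_compat; lra).
  assert (Hsplit : ln t = ln (2 * c) + ln (t / (2 * c))).
  { rewrite <- ln_mult by lra. f_equal. field. lra. }
  generalize (ln_le_sub_1 _ Hq); intros Hle.
  assert (c * ln (t / (2 * c)) <= t / 2 - c).
  { replace (t / 2 - c) with (c * (t / (2 * c) - 1)) by (field; lra).
    apply Rmult_le_compat_l; lra. }
  nra.
Qed.

Lemma RInt_Gamma_integrand_near_0_le s u : 0 < s -> 0 < u <= 1 ->
  RInt (Gamma_integrand s) u 1 <= 1 / s.
Proof.
  intros Hs Hu.
  apply Rle_trans with (RInt (fun t => exp ((s - 1) * ln t)) u 1).
  - apply RInt_le; try lra.
    + apply ex_RInt_Gamma_integrand; lra.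
    + apply ex_RInt_continuous_R; [lra|]. intros; continuity_by_derive.
    + intros t Ht. unfold Gamma_integrand, Rpower.
      rewrite <- (Rmult_1_r (exp ((s - 1) * ln t))) at 2.
      apply Rmult_le_compat_l; [left; apply exp_pos|].
      rewrite <- exp_0. apply exp_le_compat. lra.
  - rewrite (RInt_antiderivative (fun t => exp (s * ln t) / s)); try lra.
    + rewrite ln_1, Rmult_0_r, exp_0.
      assert (0 < exp (s * ln u) / s) by (apply Rdiv_lt_0_compat; [apply exp_pos | lra]). lra.
    + intros t Ht. auto_derive; [lra|].
      replace ((s - 1) * ln t) with (s * ln t + - ln t) by ring.
      rewrite exp_plus, exp_Ropp, exp_ln by lra. field. lra.
    + intros; continuity_by_derive.
Qed.

Lemma RInt_Gamma_integrand_near_oo_bounded s :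
  exists B, forall v, 1 <= v -> RInt (Gamma_integrand s) 1 v <= B.
Proof.
  set (c := Rabs (s - 1) + 1). set (K := exp (c * ln (2 * c) - c)).
  exists (2 * K). intros v Hv.
  assert (Hc : 0 < c) by (unfold c; generalize (Rabs_pos (s - 1)); lra).
  assert (HK : 0 < K) by apply exp_pos.
  apply Rle_trans with (RInt (fun t => K * exp (- (t / 2))) 1 v).
  - apply RInt_le; try lra.
    + apply ex_RInt_Gamma_integrand; lra.
    + apply ex_RInt_continuous_R; [lra|]. intros; continuity_by_derive.
    + intros t Ht. apply Gamma_integrand_tail_le; try lra.
      unfold c. generalize (Rle_abs (s - 1)). lra.
  - rewrite (RInt_antiderivative (fun t => -2 * K * exp (- (t / 2)))); try lra.
    + generalize (exp_pos (- (v / 2))) (exp_pos (- (1 / 2))).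
      generalize (exp_le_compat (- (1 / 2)) 0 ltac:(lra)); rewrite exp_0. nra.
    + intros t Ht. auto_derive; auto. cbn. unfold Rdiv. field.
    + intros; continuity_by_derive.
Qed.

Lemma RInt_Gamma_integrand_bounded s : 0 < s ->
  exists B, forall u v, 0 < u -> u <= v -> RInt (Gamma_integrand s) u v <= B.
Proof.
  intros Hs. destruct (RInt_Gamma_integrand_near_oo_bounded s) as [B HB].
  exists (1 / s + B). intros u v Hu Huv.
  set (u' := Rmin u 1). set (v' := Rmax v 1).
  assert (Hu' : 0 < u' <= 1) by (unfold u'; split; [apply Rmin_glb_lt; lra | apply Rmin_r]).
  assert (Hv' : 1 <= v') by apply Rmax_r.
  apply Rle_trans with (RInt (Gamma_integrand s) u' v').
  { apply RInt_Gamma_integrand_widen; [lra | apply Rmin_l | lra | apply Rmax_l]. }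
  rewrite <- (RInt_Chasles (Gamma_integrand s) u' 1 v') by (apply ex_RInt_Gamma_integrand; lra).
  apply Rplus_le_compat.
  - apply RInt_Gamma_integrand_near_0_le; auto.
  - apply HB; auto.
Qed.

Definition Gamma_sup (s g : R) : Prop :=
  (forall u v, 0 < u -> u <= v -> RInt (Gamma_integrand s) u v <= g) /\
  (forall eps, 0 < eps -> exists u0 v0, 0 < u0 /\ u0 <= v0 /\
     forall u v, 0 < u -> u <= u0 -> v0 <= v -> g - eps < RInt (Gamma_integrand s) u v).

Lemma Gamma_sup_exists s : 0 < s -> exists g, Gamma_sup s g.
Proof.
  intros Hs.
  set (E := fun y => exists u v, 0 < u /\ u <= v /\ y = RInt (Gamma_integrand s) u v).
  assert (HE : bound E).
  { destruct (RInt_Gamma_integrand_bounded s Hs) as [B HB].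
    exists B. intros y (u & v & Hu & Huv & ->). auto. }
  assert (HE1 : exists y, E y)
    by (exists (RInt (Gamma_integrand s) 1 1); exists 1, 1; repeat split; lra).
  destruct (completeness E HE HE1) as [g [Hub Hleast]].
  exists g. split.
  - intros u v Hu Huv. apply Hub. exists u, v; auto.
  - intros eps Heps.
    destruct (classic (exists y, E y /\ g - eps < y)) as [[y [(u & v & Hu & Huv & ->) Hy]] | Hnone].
    + exists u, v. repeat split; auto. intros u1 v1 Hu1 Hu1u Hvv1.
      apply Rlt_le_trans with (1 := Hy). apply RInt_Gamma_integrand_widen; lra.
    + exfalso. assert (g <= g - eps); [|lra]. apply Hleast. intros y Ey.
      apply Rnot_lt_le. intro. apply Hnone. exists y; auto.
Qed.

Lemma Gamma_sup_eq s g : Gamma_sup s g -> Gamma s = g.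
Proof.
  intros [Hub Happrox]. unfold Gamma.
  change (fun t => Rpower t (s - 1) * exp (- t)) with (Gamma_integrand s).
  apply (@is_RInt_gen_unique R_CompleteNormedModule).
  - apply Proper_StrongProper, at_right_proper_filter.
  - apply Proper_StrongProper, Rbar_locally_filter.
  - intros P [eps HP].
    destruct (Happrox eps (cond_pos eps)) as (u0 & v0 & Hu0 & Huv0 & Hclose).
    apply Filter_prod with (fun u => 0 < u <= u0) (fun v => v0 < v).
    + exists (mkposreal u0 Hu0). intros y Hy Hy0. change (Rabs (y - 0) < u0) in Hy.
      rewrite Rminus_0_r, Rabs_pos_eq in Hy by lra. simpl; lra.
    + exists v0. auto.
    + intros u v [Hu Hu'] Hv. exists (RInt (Gamma_integrand s) u v). split.
      * apply RInt_correct, ex_RInt_Gamma_integrand; lra.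
      * apply HP. change (Rabs (RInt (Gamma_integrand s) u v - g) < eps).
        generalize (Hub u v Hu ltac:(lra)) (Hclose u v Hu Hu' ltac:(lra)); intros.
        rewrite Rabs_left1 by lra. lra.
Qed.

Lemma Gamma_sup_Gamma s : 0 < s -> Gamma_sup s (Gamma s).
Proof.
  intros Hs. destruct (Gamma_sup_exists s Hs) as [g Hg].
  rewrite (Gamma_sup_eq s g Hg). exact Hg.
Qed.

Lemma Gamma_pos s : 0 < s -> 0 < Gamma s.
Proof.
  intros Hs. apply Rlt_le_trans with (RInt (Gamma_integrand s) 1 2).
  - apply RInt_gt_0; [lra | intros; apply Gamma_integrand_pos |].
    intros t Ht. unfold Gamma_integrand, Rpower. continuity_by_derive.
  - apply (proj1 (Gamma_sup_Gamma s Hs)); lra.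
Qed.

Lemma RInt_Gamma_integrand_succ s u v : 0 < u -> u <= v ->
  RInt (Gamma_integrand (s + 1)) u v
  = Rpower u s * exp (- u) - Rpower v s * exp (- v) + s * RInt (Gamma_integrand s) u v.
Proof.
  intros Hu Huv.
  assert (Hint : ex_RInt (Gamma_integrand s) u v) by (apply ex_RInt_Gamma_integrand; auto).
  assert (Hparts : RInt (fun t => Gamma_integrand (s + 1) t - s * Gamma_integrand s t) u v
                   = Rpower u s * exp (- u) - Rpower v s * exp (- v)).
  { rewrite (RInt_antiderivative (fun t => - (Rpower t s * exp (- t)))); [lra | lra | |].
    - intros t Ht. unfold Gamma_integrand, Rpower. auto_derive; [lra|].
      replace (s + 1 - 1) with s by ring.
      replace ((s - 1) * ln t) with (s * ln t + - ln t) by ring.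
      rewrite exp_plus, (exp_Ropp (ln t)), exp_ln by lra. field. lra.
    - intros t Ht. unfold Gamma_integrand, Rpower. continuity_by_derive. }
  assert (Hscal : RInt (fun t => s * Gamma_integrand s t) u v = s * RInt (Gamma_integrand s) u v)
    by exact (RInt_scal (Gamma_integrand s) u v s Hint).
  rewrite (RInt_minus (Gamma_integrand (s + 1)) (fun t => s * Gamma_integrand s t)) in Hparts.
  - change minus with Rminus in Hparts. lra.
  - apply ex_RInt_Gamma_integrand; auto.
  - exact (ex_RInt_scal (Gamma_integrand s) u v s Hint).
Qed.

Lemma Rpower_exp_neg_near_0 s : 0 < s -> forall eps, 0 < eps ->
  exists eta, 0 < eta /\ forall t, 0 < t <= eta -> Rpower t s * exp (- t) < eps.
Proof.
  intros Hs eps Heps. exists (exp (ln eps / s - 1)). split; [apply exp_pos|].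
  intros t [Ht Hteta]. unfold Rpower.
  assert (Hln : ln t <= ln eps / s - 1)
    by (rewrite <- (ln_exp (ln eps / s - 1)); apply ln_le; lra).
  assert (Hlt : s * ln t < ln eps).
  { apply Rmult_le_compat_l with (r := s) in Hln; [|lra].
    replace (s * (ln eps / s - 1)) with (ln eps - s) in Hln by (field; lra). lra. }
  apply exp_increasing in Hlt. rewrite exp_ln in Hlt by lra.
  generalize (exp_le_compat (- t) 0 ltac:(lra)) (exp_pos (- t)) (exp_pos (s * ln t)).
  rewrite exp_0. nra.
Qed.

Lemma Rpower_exp_neg_near_oo s : 0 < s -> forall eps, 0 < eps ->
  exists V, 1 <= V /\ forall t, V <= t -> Rpower t s * exp (- t) < eps.
Proof.
  intros Hs eps Heps. set (K := exp (s * ln (2 * s) - s)).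
  exists (Rmax 1 (2 * (ln K - ln eps) + 1)). split; [apply Rmax_l|].
  intros t Ht.
  generalize (Rmax_l 1 (2 * (ln K - ln eps) + 1)) (Rmax_r 1 (2 * (ln K - ln eps) + 1)).
  intros H1 H2. unfold Rpower.
  eapply Rle_lt_trans; [apply (Gamma_integrand_tail_le s s t); lra|]. fold K.
  replace eps with (K * exp (ln eps - ln K)).
  - apply Rmult_lt_compat_l; [apply exp_pos|]. apply exp_increasing. lra.
  - unfold Rminus. rewrite exp_plus, exp_Ropp, !exp_ln by (try apply exp_pos; lra).
    field. apply Rgt_not_eq, exp_pos.
Qed.

Lemma Gamma_succ s : 0 < s -> Gamma (s + 1) = s * Gamma s.
Proof.
  intros Hs. apply Gamma_sup_eq.
  destruct (Gamma_sup_Gamma s Hs) as [Hub Happrox].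
  assert (Hbd : forall t, 0 < Rpower t s * exp (- t))
    by (intros; apply Rmult_lt_0_compat; apply exp_pos).
  split.
  - intros u v Hu Huv. apply Rnot_lt_le. intro Hgt.
    destruct (Rpower_exp_neg_near_0 s Hs (RInt (Gamma_integrand (s + 1)) u v - s * Gamma s))
      as (eta & Heta & Hsmall); [lra|].
    set (u' := Rmin u eta).
    assert (Hu' : 0 < u' <= u /\ u' <= eta)
      by (unfold u'; repeat split; [apply Rmin_glb_lt; lra | apply Rmin_l | apply Rmin_r]).
    assert (Hwide : RInt (Gamma_integrand (s + 1)) u v <= RInt (Gamma_integrand (s + 1)) u' v)
      by (apply RInt_Gamma_integrand_widen; lra).
    rewrite (RInt_Gamma_integrand_succ s u' v) in Hwide by lra.
    assert (s * RInt (Gamma_integrand s) u' v <= s * Gamma s)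
      by (apply Rmult_le_compat_l; [lra | apply Hub; lra]).
    generalize (Hsmall u' ltac:(lra)) (Hbd v). lra.
  - intros eps Heps.
    destruct (Happrox (eps / (2 * s))) as (u0 & v0 & Hu0 & Huv0 & Hclose);
      [apply Rdiv_lt_0_compat; lra|].
    destruct (Rpower_exp_neg_near_oo s Hs (eps / 2)) as (V & HV & Hsmall); [lra|].
    exists u0, (Rmax v0 V). split; auto. split; [generalize (Rmax_l v0 V); lra|].
    intros u v Hu Huu0 Hv.
    generalize (Rmax_l v0 V) (Rmax_r v0 V); intros.
    rewrite RInt_Gamma_integrand_succ by lra.
    generalize (Hclose u v Hu Huu0 ltac:(lra)) (Hsmall v ltac:(lra)) (Hbd u).
    assert (s * (Gamma s - eps / (2 * s)) = s * Gamma s - eps / 2) by (field; lra).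
    nra.
Qed.

Lemma Gamma_poch s n : 0 < s -> Gamma (s + INR n) = poch s n * Gamma s.
Proof.
  intros Hs. induction n as [|n IH].
  - simpl. rewrite Rplus_0_r. ring.
  - cbn [poch]. rewrite S_INR. replace (s + (INR n + 1)) with (s + INR n + 1) by ring.
    rewrite Gamma_succ by (generalize (pos_INR n); lra). rewrite IH. ring.
Qed.

Lemma Gamma_integrand_div_exp s A t : 0 < A ->
  Gamma_integrand s t / A = exp ((s - 1) * ln t - t - ln A).
Proof.
  intros HA. unfold Gamma_integrand, Rpower, Rminus.
  rewrite !exp_plus, (exp_Ropp (ln A)), exp_ln by lra. field. lra.
Qed.

(* Pointwise weighted AM-GM: the integrand at [l x + (1-l) y] is the weighted geometric mean of
   the integrands at [x] and [y]. *)
Lemma Gamma_integrand_convex_comb x y l A B t : 0 < l < 1 -> 0 < A -> 0 < B ->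
  Gamma_integrand (l * x + (1 - l) * y) t
  <= exp (l * ln A + (1 - l) * ln B)
     * (l * (Gamma_integrand x t / A) + (1 - l) * (Gamma_integrand y t / B)).
Proof.
  intros Hl HA HB. rewrite !Gamma_integrand_div_exp by auto.
  replace (Gamma_integrand (l * x + (1 - l) * y) t)
    with (exp (l * ln A + (1 - l) * ln B)
          * exp (l * ((x - 1) * ln t - t - ln A) + (1 - l) * ((y - 1) * ln t - t - ln B))).
  - apply Rmult_le_compat_l; [left; apply exp_pos | apply exp_convex; auto].
  - unfold Gamma_integrand, Rpower. rewrite <- !exp_plus. f_equal. ring.
Qed.

Lemma RInt_lin_comb (f g : R -> R) a b u v : ex_RInt f u v -> ex_RInt g u v ->
  RInt (fun t => a * f t + b * g t) u v = a * RInt f u v + b * RInt g u v.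
Proof.
  intros Hf Hg.
  rewrite (RInt_plus (fun t => a * f t) (fun t => b * g t)).
  - exact (f_equal2 Rplus (RInt_scal f u v a Hf) (RInt_scal g u v b Hg)).
  - exact (ex_RInt_scal f u v a Hf).
  - exact (ex_RInt_scal g u v b Hg).
Qed.

Lemma Gamma_le_of_RInt_le s B : 0 < s ->
  (forall u v, 0 < u -> u <= v -> RInt (Gamma_integrand s) u v <= B) -> Gamma s <= B.
Proof.
  intros Hs HB. apply Rnot_lt_le. intro Hlt.
  destruct (proj2 (Gamma_sup_Gamma s Hs) (Gamma s - B)) as (u0 & v0 & Hu0 & Huv0 & Hclose); [lra|].
  generalize (Hclose u0 v0 Hu0 (Rle_refl _) (Rle_refl _)) (HB u0 v0 Hu0 Huv0). lra.
Qed.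

Lemma Gamma_ln_convex x y l : 0 < x -> 0 < y -> 0 < l < 1 ->
  ln (Gamma (l * x + (1 - l) * y)) <= l * ln (Gamma x) + (1 - l) * ln (Gamma y).
Proof.
  intros Hx Hy Hl.
  assert (Gx := Gamma_pos x Hx). assert (Gy := Gamma_pos y Hy).
  set (K := exp (l * ln (Gamma x) + (1 - l) * ln (Gamma y))).
  rewrite <- (ln_exp (l * ln (Gamma x) + (1 - l) * ln (Gamma y))).
  apply ln_le; [apply Gamma_pos; nra|]. fold K.
  apply Gamma_le_of_RInt_le; [nra|]. intros u v Hu Huv.
  assert (Ix := proj1 (Gamma_sup_Gamma x Hx) u v Hu Huv).
  assert (Iy := proj1 (Gamma_sup_Gamma y Hy) u v Hu Huv).
  assert (Ex := ex_RInt_Gamma_integrand x u v Hu Huv).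
  assert (Ey := ex_RInt_Gamma_integrand y u v Hu Huv).
  apply Rle_trans with
    (RInt (fun t => K * l / Gamma x * Gamma_integrand x t
                    + K * (1 - l) / Gamma y * Gamma_integrand y t) u v).
  - apply RInt_le; auto.
    + apply ex_RInt_Gamma_integrand; auto.
    + apply (ex_RInt_plus (V := R_NormedModule));
        apply (ex_RInt_scal (V := R_NormedModule)); auto.
    + intros t _. eapply Rle_trans; [exact (Gamma_integrand_convex_comb x y l _ _ t Hl Gx Gy)|].
      fold K. right. field. lra.
  - rewrite RInt_lin_comb by auto.
    assert (HK : 0 < K) by apply exp_pos.
    assert (Rx : RInt (Gamma_integrand x) u v / Gamma x <= 1) by (apply Rle_div_l; lra).
    assert (Ry : RInt (Gamma_integrand y) u v / Gamma y <= 1) by (apply Rle_div_l; lra).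
    replace (K * l / Gamma x * RInt (Gamma_integrand x) u v
             + K * (1 - l) / Gamma y * RInt (Gamma_integrand y) u v)
      with (K * (l * (RInt (Gamma_integrand x) u v / Gamma x)
                 + (1 - l) * (RInt (Gamma_integrand y) u v / Gamma y))) by (field; lra).
    rewrite <- (Rmult_1_r K) at 2. apply Rmult_le_compat_l; nra.
Qed.

Section ConvexIncrements.

Variable phi : R -> R.
Hypothesis phi_convex : forall x y l, 0 < x -> 0 < y -> 0 < l < 1 ->
  phi (l * x + (1 - l) * y) <= l * phi x + (1 - l) * phi y.

Lemma convex_three_point p q r : 0 < p -> p < q < r ->
  (r - p) * phi q <= (r - q) * phi p + (q - p) * phi r.
Proof.
  intros Hp [Hpq Hqr]. set (l := (r - q) / (r - p)).
  assert (Hl : 0 < l < 1).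
  { unfold l. split; [apply Rdiv_lt_0_compat; lra | apply Rlt_div_l; lra]. }
  assert (Hq : q = l * p + (1 - l) * r) by (unfold l; field; lra).
  generalize (phi_convex p r l Hp ltac:(lra) Hl). rewrite <- Hq. intros Hconv.
  apply Rmult_le_compat_l with (r := r - p) in Hconv; [|lra].
  replace ((r - p) * (l * phi p + (1 - l) * phi r)) with ((r - q) * phi p + (q - p) * phi r)
    in Hconv by (unfold l; field; lra).
  exact Hconv.
Qed.

Lemma convex_slope_le_right p q r : 0 < p -> p < q < r ->
  (phi q - phi p) / (q - p) <= (phi r - phi p) / (r - p).
Proof.
  intros Hp Hpqr. generalize (convex_three_point p q r Hp Hpqr). intros H3.
  assert (E : (phi r - phi p) / (r - p) - (phi q - phi p) / (q - p)
              = ((r - q) * phi p + (q - p) * phi r - (r - p) * phi q) / ((q - p) * (r - p)))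
    by (field; lra).
  assert (0 <= ((r - q) * phi p + (q - p) * phi r - (r - p) * phi q) / ((q - p) * (r - p)))
    by (apply Rdiv_le_0_compat; nra).
  lra.
Qed.

Lemma convex_slope_le_left p q r : 0 < p -> p < q < r ->
  (phi r - phi p) / (r - p) <= (phi r - phi q) / (r - q).
Proof.
  intros Hp Hpqr. generalize (convex_three_point p q r Hp Hpqr). intros H3.
  assert (E : (phi r - phi q) / (r - q) - (phi r - phi p) / (r - p)
              = ((r - q) * phi p + (q - p) * phi r - (r - p) * phi q) / ((r - q) * (r - p)))
    by (field; lra).
  assert (0 <= ((r - q) * phi p + (q - p) * phi r - (r - p) * phi q) / ((r - q) * (r - p)))
    by (apply Rdiv_le_0_compat; nra).
  lra.
Qed.

Lemma convex_increment_le s t d : 0 < s -> s < t -> 0 < d ->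
  phi (s + d) - phi s <= phi (t + d) - phi t.
Proof.
  intros Hs Hst Hd.
  assert (H1 := convex_slope_le_right s (s + d) (t + d) Hs ltac:(lra)).
  assert (H2 := convex_slope_le_left s t (t + d) Hs ltac:(lra)).
  replace (s + d - s) with d in H1 by ring. replace (t + d - t) with d in H2 by ring.
  assert (Hslope : (phi (s + d) - phi s) / d <= (phi (t + d) - phi t) / d) by lra.
  apply Rmult_le_compat_r with (r := d) in Hslope; [|lra].
  unfold Rdiv in Hslope. rewrite !Rmult_assoc, Rinv_l, !Rmult_1_r in Hslope by lra.
  exact Hslope.
Qed.

End ConvexIncrements.

Lemma Gamma_shift_le s t d : 0 < s -> s <= t -> 0 < d ->
  Gamma (s + d) * Gamma t <= Gamma (t + d) * Gamma s.
Proof.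
  intros Hs [Hst | <-] Hd; [|lra].
  assert (Hln := convex_increment_le (fun r => ln (Gamma r)) Gamma_ln_convex s t d Hs Hst Hd).
  cbv beta in Hln.
  rewrite <- (exp_ln (Gamma (s + d) * Gamma t)), <- (exp_ln (Gamma (t + d) * Gamma s))
    by (apply Rmult_lt_0_compat; apply Gamma_pos; lra).
  apply exp_le_compat. rewrite !ln_mult by (apply Gamma_pos; lra). lra.
Qed.

(** * Series of nonnegative terms *)

Lemma ex_series_ext_R (a b : nat -> R) : (forall n, a n = b n) -> ex_series a -> ex_series b.
Proof. exact (ex_series_ext (V := R_NormedModule) a b). Qed.

Lemma is_series_ext_R (a b : nat -> R) l : (forall n, a n = b n) -> is_series a l -> is_series b l.
Proof. exact (is_series_ext (V := R_NormedModule) a b l). Qed.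

Lemma sum_f_R0_le_Series (a : nat -> R) N : (forall n, 0 <= a n) -> ex_series a ->
  sum_f_R0 a N <= Series a.
Proof.
  intros Ha Hex. apply sum_incr; auto.
  apply is_series_Reals, Series_correct, Hex.
Qed.

Lemma Series_le_of_sum_le (a : nat -> R) B : ex_series a ->
  (forall N, sum_f_R0 a N <= B) -> Series a <= B.
Proof.
  intros Hex HB. apply Rnot_lt_le. intro Hlt.
  assert (Hcv := proj1 (is_series_Reals a (Series a)) (Series_correct a Hex)).
  destruct (Hcv (Series a - B)) as [N HN]; [lra|].
  specialize (HN N (le_n _)). specialize (HB N).
  unfold R_dist in HN. apply Rabs_def2 in HN. lra.
Qed.

Lemma ex_series_of_sum_le (a : nat -> R) B : (forall n, 0 <= a n) ->
  (forall N, sum_f_R0 a N <= B) -> ex_series a.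
Proof.
  intros Ha HB. destruct (growing_cv (sum_f_R0 a)) as [l Hl].
  - intro n. simpl. generalize (Ha (S n)). lra.
  - exists B. intros y [N ->]. auto.
  - exists l. apply is_series_Reals, Hl.
Qed.

Lemma sum_f_R0_le_mono (a : nat -> R) M N : (forall n, 0 <= a n) -> (M <= N)%nat ->
  sum_f_R0 a M <= sum_f_R0 a N.
Proof.
  intros Ha HMN. induction HMN as [|N HMN IH]; [lra|].
  simpl. generalize (Ha (S N)). lra.
Qed.

Lemma term_le_sum_f_R0 (a : nat -> R) k N : (forall n, 0 <= a n) -> (k <= N)%nat ->
  a k <= sum_f_R0 a N.
Proof.
  intros Ha HkN. apply Rle_trans with (sum_f_R0 a k); [|apply sum_f_R0_le_mono; auto].
  destruct k as [|k]; simpl; [lra|]. generalize (cond_pos_sum a k Ha). lra.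
Qed.

Lemma Series_pos (a : nat -> R) k : (forall n, 0 <= a n) -> 0 < a k -> ex_series a ->
  0 < Series a.
Proof.
  intros Ha Hk Hex. apply Rlt_le_trans with (sum_f_R0 a k).
  - generalize (term_le_sum_f_R0 a k k Ha (le_n _)). lra.
  - apply sum_f_R0_le_Series; auto.
Qed.

Lemma Series_lt (u v : nat -> R) k : (forall n, u n <= v n) -> u k < v k ->
  ex_series u -> ex_series v -> Series u < Series v.
Proof.
  intros Hle Hk Hu Hv.
  assert (Hpos : 0 < Series (fun n => v n - u n)).
  { apply (Series_pos _ k); [intros n; generalize (Hle n); lra | lra |].
    apply (ex_series_minus (V := R_NormedModule)); auto. }
  rewrite Series_minus in Hpos by auto. lra.
Qed.

Lemma ex_series_le_nonneg (a b : nat -> R) : (forall n, 0 <= a n <= b n) ->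
  ex_series b -> ex_series a.
Proof.
  intros Hab Hb. apply (ex_series_le (V := R_CompleteNormedModule) a b); auto.
  intros n. change (Rabs (a n) <= b n). rewrite Rabs_pos_eq; apply Hab.
Qed.

Lemma sum_f_R0_swap (f : nat -> nat -> R) J L :
  sum_f_R0 (fun l => sum_f_R0 (fun j => f j l) J) L
  = sum_f_R0 (fun j => sum_f_R0 (fun l => f j l) L) J.
Proof. induction L as [|L IH]; simpl; [reflexivity|]. rewrite IH, <- plus_sum. reflexivity. Qed.

Lemma sum_f_R0_antidiagonal (u : nat -> nat -> R) N :
  sum_f_R0 (fun n => sum_f_R0 (fun k => u k (n - k)%nat) n) N
  = sum_f_R0 (fun j => sum_f_R0 (fun l => u j l) (N - j)) N.
Proof.
  induction N as [|N IH]; [reflexivity|].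
  rewrite tech5, IH, (tech5 (fun j => sum_f_R0 (fun l => u j l) (S N - j))).
  replace (S N - S N)%nat with 0%nat by lia.
  rewrite (sum_eq (fun j => sum_f_R0 (fun l => u j l) (S N - j))
                  (fun j => sum_f_R0 (fun l => u j l) (N - j) + u j (S N - j)%nat)).
  - rewrite plus_sum, (tech5 (fun k => u k (S N - k)%nat)).
    replace (S N - S N)%nat with 0%nat by lia. simpl. ring.
  - intros j Hj. replace (S N - j)%nat with (S (N - j)) by lia. reflexivity.
Qed.

Lemma Series_sum_f_R0 (u : nat -> nat -> R) J : (forall j, ex_series (u j)) ->
  ex_series (fun l => sum_f_R0 (fun j => u j l) J)
  /\ Series (fun l => sum_f_R0 (fun j => u j l) J) = sum_f_R0 (fun j => Series (u j)) J.
Proof.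
  intros Hrows. induction J as [|J [IHex IHeq]]; simpl; [auto|].
  split.
  - exact (ex_series_plus (V := R_NormedModule) _ _ IHex (Hrows (S J))).
  - rewrite Series_plus, IHeq by auto. reflexivity.
Qed.

Lemma is_series_rows_of_antidiagonals (u : nat -> nat -> R) T :
  (forall j l, 0 <= u j l) ->
  is_series (fun n => sum_f_R0 (fun k => u k (n - k)%nat) n) T ->
  (forall j, ex_series (u j)) /\ is_series (fun j => Series (u j)) T.
Proof.
  intros Hu Hdiag.
  set (d := fun n => sum_f_R0 (fun k => u k (n - k)%nat) n).
  assert (Hrow_pos : forall j L, 0 <= sum_f_R0 (fun l => u j l) L)
    by (intros; apply cond_pos_sum; auto).
  assert (HdT : forall N, sum_f_R0 d N <= T).
  { intros N. rewrite <- (is_series_unique _ _ Hdiag).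
    apply sum_f_R0_le_Series; [intros; apply cond_pos_sum; auto | eexists; eauto]. }
  assert (Hrect : forall J L, sum_f_R0 (fun j => sum_f_R0 (fun l => u j l) L) J <= T).
  { intros J L. apply Rle_trans with (sum_f_R0 d (J + L)); auto.
    unfold d. rewrite sum_f_R0_antidiagonal.
    apply Rle_trans with (sum_f_R0 (fun j => sum_f_R0 (fun l => u j l) (J + L - j)) J).
    - apply sum_Rle. intros j Hj. apply sum_f_R0_le_mono; [auto | lia].
    - apply sum_f_R0_le_mono; [auto | lia]. }
  assert (Hrows : forall j, ex_series (u j)).
  { intros j. apply ex_series_of_sum_le with T; [auto|]. intros L.
    apply Rle_trans with (2 := Hrect j L).
    apply (term_le_sum_f_R0 (fun j => sum_f_R0 (fun l => u j l) L)); auto. }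
  split; auto.
  apply is_series_Reals. intros eps Heps.
  destruct (proj1 (is_series_Reals _ _) Hdiag eps Heps) as [N HN].
  exists N. intros n Hn. specialize (HN n Hn). fold d in HN. unfold R_dist in *.
  assert (Hup : sum_f_R0 (fun j => Series (u j)) n <= T).
  { destruct (Series_sum_f_R0 u n Hrows) as [Hex Heq]. rewrite <- Heq.
    apply Series_le_of_sum_le; auto. intros L. rewrite sum_f_R0_swap. auto. }
  assert (Hlow : sum_f_R0 d n <= sum_f_R0 (fun j => Series (u j)) n).
  { unfold d. rewrite sum_f_R0_antidiagonal. apply sum_Rle. intros j Hj.
    apply sum_f_R0_le_Series; auto. }
  apply Rabs_def2 in HN. apply Rabs_def1; lra.
Qed.

(** * Chebyshev's sum inequality *)

Lemma increasing_lt (f : nat -> R) : (forall n, f n < f (S n)) ->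
  forall m n, (m < n)%nat -> f m < f n.
Proof.
  intros Hf m n Hmn. induction Hmn as [|n Hmn IH]; [apply Hf|]. apply Rlt_trans with (f n); auto.
Qed.

Lemma increasing_le (f : nat -> R) : (forall n, f n < f (S n)) ->
  forall m n, (m <= n)%nat -> f m <= f n.
Proof.
  intros Hf m n Hmn. destruct (Nat.eq_dec m n) as [-> | Hne]; [lra|].
  left. apply increasing_lt; auto. lia.
Qed.

Lemma Series_mul_sub_const (q p : nat -> R) P : ex_series q -> ex_series (fun n => q n * p n) ->
  ex_series (fun n => q n * (p n - P))
  /\ Series (fun n => q n * (p n - P)) = Series (fun n => q n * p n) - P * Series q.
Proof.
  intros Eq Eqp.
  assert (EPq : ex_series (fun n => P * q n))
    by exact (ex_series_scal_l (V := R_NormedModule) P _ Eq).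
  assert (Ediff : ex_series (fun n => q n * p n - P * q n))
    by exact (ex_series_minus (V := R_NormedModule) _ _ Eqp EPq).
  rewrite <- Series_scal_l, <- Series_minus by auto.
  split.
  - apply (ex_series_ext_R (fun n => q n * p n - P * q n)); [intros; ring | exact Ediff].
  - apply Series_ext. intros; ring.
Qed.

Lemma increasing_crosses_mean (w p : nat -> R) P :
  (forall n, 0 < w n) -> (forall n, p n < p (S n)) ->
  ex_series (fun n => w n * (p n - P)) -> Series (fun n => w n * (p n - P)) = 0 ->
  exists K, (0 < K)%nat /\ p 0%nat < P /\
    (forall n, (n < K)%nat -> p n <= P) /\ (forall n, (K <= n)%nat -> P < p n).
Proof.
  intros Hw Hp Hex Hzero.
  assert (Hp0 : p 0%nat < P).
  { apply Rnot_le_lt. intro HP.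
    assert (0 < Series (fun n => w n * (p n - P))); [|lra].
    apply (Series_pos _ 1); auto.
    - intros n. generalize (increasing_le p Hp 0 n ltac:(lia)) (Hw n). nra.
    - generalize (Hp 0%nat) (Hw 1%nat). nra. }
  assert (Habove : exists k, P < p k).
  { apply NNPP. intro Hnone.
    assert (Hneg : 0 < Series (fun n => - (w n * (p n - P)))).
    { apply (Series_pos _ 0).
      - intros n. assert (p n <= P) by (apply Rnot_lt_le; intro; apply Hnone; eauto).
        generalize (Hw n). nra.
      - generalize (Hw 0%nat). nra.
      - apply (ex_series_opp (V := R_NormedModule)); auto. }
    rewrite Series_opp in Hneg. lra. }
  destruct (dec_inh_nat_subset_has_unique_least_element (fun k => P < p k)
              (fun k => classic _) Habove) as [K [[HK Hleast] _]].
  exists K. repeat split; auto.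
  - destruct K; [lra | lia].
  - intros n Hn. apply Rnot_lt_le. intro Hlt. specialize (Hleast n Hlt). lia.
  - intros n Hn. apply Rlt_le_trans with (1 := HK). apply increasing_le; auto.
Qed.

(* Centring [p] at its weighted mean [P], and [r] at its value [r K] at the index [K]
   where [p] crosses [P], makes every term of [sum w (r - r K) (p - P)] nonnegative. *)
Lemma Chebyshev_sum_lt (w r p : nat -> R) :
  (forall n, 0 < w n) -> (forall n, r n < r (S n)) -> (forall n, p n < p (S n)) ->
  ex_series w -> ex_series (fun n => w n * r n) -> ex_series (fun n => w n * p n) ->
  ex_series (fun n => w n * r n * p n) ->
  Series (fun n => w n * p n) * Series (fun n => w n * r n)
  < Series (fun n => w n * r n * p n) * Series w.
Proof.
  intros Hw Hr Hp Ew Ewr Ewp Ewrp.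
  assert (Hsw : 0 < Series w) by (apply (Series_pos w 0); auto; intros; left; auto).
  set (P := Series (fun n => w n * p n) / Series w).
  destruct (Series_mul_sub_const w p P Ew Ewp) as [ED HD].
  assert (HD0 : Series (fun n => w n * (p n - P)) = 0) by (rewrite HD; unfold P; field; lra).
  destruct (increasing_crosses_mean w p P Hw Hp ED HD0) as (K & HK & Hp0 & Hbelow & Habove).
  destruct (Series_mul_sub_const (fun n => w n * r n) p P Ewr Ewrp) as [EE HE].
  assert (Hpos : 0 < Series (fun n => w n * r n * (p n - P))).
  { replace 0 with (Series (fun n => r K * (w n * (p n - P))))
      by (rewrite Series_scal_l, HD0; ring).
    apply (Series_lt _ _ 0); auto.
    - intros n. destruct (Nat.lt_ge_cases n K) as [Hn | Hn].
      + generalize (Hbelow n Hn) (increasing_le r Hr n K ltac:(lia)) (Hw n). intros.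
        assert (0 <= (r K - r n) * (w n * (P - p n))) by (apply Rmult_le_pos; nra). nra.
      + generalize (Habove n Hn) (increasing_le r Hr K n Hn) (Hw n). intros.
        assert (0 <= (r n - r K) * (w n * (p n - P))) by (apply Rmult_le_pos; nra). nra.
    - generalize (increasing_lt r Hr 0 K HK) (Hw 0%nat). intros.
      assert (0 < (r K - r 0%nat) * (w 0%nat * (P - p 0%nat))) by (apply Rmult_lt_0_compat; nra).
      nra.
    - exact (ex_series_scal_l (V := R_NormedModule) (r K) _ ED). }
  rewrite HE in Hpos. unfold P in Hpos.
  apply Rmult_lt_compat_r with (r := Series w) in Hpos; auto.
  replace ((Series (fun n => w n * r n * p n)
            - Series (fun n => w n * p n) / Series w * Series (fun n => w n * r n)) * Series w)
    with (Series (fun n => w n * r n * p n) * Series w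
          - Series (fun n => w n * p n) * Series (fun n => w n * r n)) in Hpos by (field; lra).
  lra.
Qed.

(** * Pochhammer symbols and the series [f] *)

Lemma poch_pos s n : 0 < s -> 0 < poch s n.
Proof.
  intros Hs. induction n as [|n IH]; simpl; [lra|].
  apply Rmult_lt_0_compat; auto. generalize (pos_INR n). lra.
Qed.

Lemma poch_ratio_lt_succ a b n : 0 < a -> a < b ->
  poch b n / poch a n < poch b (S n) / poch a (S n).
Proof.
  intros Ha Hab. simpl.
  generalize (poch_pos a n Ha) (poch_pos b n ltac:(lra)) (pos_INR n). intros Pa Pb Hn.
  replace (poch b n * (b + INR n) / (poch a n * (a + INR n)))
    with (poch b n / poch a n * ((b + INR n) / (a + INR n))) by (field; lra).
  assert (1 < (b + INR n) / (a + INR n)) by (apply Rlt_div_r; lra).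
  assert (0 < poch b n / poch a n) by (apply Rdiv_lt_0_compat; auto).
  nra.
Qed.

Definition poch_fact (s : R) (n : nat) : R := poch s n / INR (Factorial.fact n).

Lemma poch_fact_pos s n : 0 < s -> 0 < poch_fact s n.
Proof. intros Hs. apply Rdiv_lt_0_compat; [apply poch_pos; auto | apply INR_fact_lt_0]. Qed.

Lemma poch_fact_succ s n : INR (S n) * poch_fact s (S n) = (s + INR n) * poch_fact s n.
Proof.
  unfold poch_fact. simpl poch. change (Factorial.fact (S n)) with (S n * Factorial.fact n)%nat.
  rewrite mult_INR. generalize (INR_fact_lt_0 n) (lt_0_INR (S n) ltac:(lia)). intros.
  field. lra.
Qed.

(* Multiply by [S n] and split it as [k + (S n - k)] inside the convolution, so that
   [poch_fact_succ] applies to one factor of each term. *)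
Lemma poch_fact_Vandermonde u v n :
  sum_f_R0 (fun k => poch_fact u k * poch_fact v (n - k)) n = poch_fact (u + v) n.
Proof.
  induction n as [|n IH]; [unfold poch_fact; simpl; field|].
  apply Rmult_eq_reg_l with (INR (S n)); [|apply not_0_INR; lia].
  rewrite poch_fact_succ, <- IH.
  set (T := fun k => poch_fact u k * poch_fact v (S n - k)).
  replace (INR (S n) * sum_f_R0 T (S n))
    with (sum_f_R0 (fun k => INR k * T k) (S n)
          + sum_f_R0 (fun k => (INR (S n) - INR k) * T k) (S n))
    by (rewrite <- plus_sum, scal_sum; apply sum_eq; intros; ring).
  assert (Hleft : sum_f_R0 (fun k => INR k * T k) (S n)
                  = sum_f_R0 (fun j => (u + INR j) * (poch_fact u j * poch_fact v (n - j))) n).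
  { rewrite (decomp_sum _ (S n)) by lia. simpl pred. rewrite Rmult_0_l, Rplus_0_l.
    apply sum_eq. intros j Hj. unfold T. replace (S n - S j)%nat with (n - j)%nat by lia.
    rewrite <- Rmult_assoc, poch_fact_succ. ring. }
  assert (Hright : sum_f_R0 (fun k => (INR (S n) - INR k) * T k) (S n)
                   = sum_f_R0 (fun j => (v + INR n - INR j)
                                        * (poch_fact u j * poch_fact v (n - j))) n).
  { rewrite tech5. replace (INR (S n) - INR (S n)) with 0 by ring. rewrite Rmult_0_l, Rplus_0_r.
    apply sum_eq. intros j Hj. unfold T. replace (S n - j)%nat with (S (n - j)) by lia.
    replace (INR (S n) - INR j) with (INR (S (n - j))) by (rewrite !S_INR, minus_INR by lia; ring).
    replace (INR (S (n - j)) * (poch_fact u j * poch_fact v (S (n - j))))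
      with (poch_fact u j * (INR (S (n - j)) * poch_fact v (S (n - j)))) by ring.
    rewrite poch_fact_succ, minus_INR by lia. ring. }
  rewrite Hleft, Hright, <- plus_sum, scal_sum. apply sum_eq. intros; ring.
Qed.

Lemma fterm_eq fs s x n : fterm fs s x n = fs n * poch_fact s n * x ^ n.
Proof. unfold fterm, poch_fact. generalize (INR_fact_lt_0 n). intros. field. lra. Qed.

Section PositiveCoefficients.

Variable fs : nat -> R.
Hypothesis fs_pos : forall n, 0 < fs n.

Lemma fterm_pos s x n : 0 < s -> 0 < x -> 0 < fterm fs s x n.
Proof.
  intros Hs Hx. rewrite fterm_eq.
  apply Rmult_lt_0_compat; [apply Rmult_lt_0_compat|]; auto using poch_fact_pos, pow_lt.
Qed.

Lemma fser_pos s x : 0 < s -> 0 < x -> ex_series (fterm fs s x) -> 0 < fser fs s x.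
Proof.
  intros Hs Hx Hex. apply (Series_pos _ 0); auto.
  - intros; left; apply fterm_pos; auto.
  - apply fterm_pos; auto.
Qed.

Lemma fterm_poch_ratio a b x n : 0 < a ->
  fterm fs a x n * (poch b n / poch a n) = fterm fs b x n.
Proof.
  intros Ha. unfold fterm. generalize (poch_pos a n Ha) (INR_fact_lt_0 n). intros. field. lra.
Qed.

Definition fser_shifted s x j := Series (fun l => fs (j + l)%nat * poch_fact s l * x ^ l).

Lemma fser_shifted_0 s x : fser_shifted s x 0 = fser fs s x.
Proof. apply Series_ext. intros. rewrite fterm_eq. reflexivity. Qed.

Lemma is_series_fser_add s d x : 0 < s -> 0 < d -> 0 < x ->
  ex_series (fterm fs (s + d) x) ->
  (forall j, ex_series (fun l => fs (j + l)%nat * poch_fact s l * x ^ l))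
  /\ is_series (fun j => poch_fact d j * x ^ j * fser_shifted s x j) (fser fs (s + d) x).
Proof.
  intros Hs Hd Hx Hex.
  set (u := fun j l => poch_fact d j * x ^ j * (fs (j + l)%nat * poch_fact s l * x ^ l)).
  assert (Hcoef : forall j, 0 < poch_fact d j * x ^ j)
    by (intros; apply Rmult_lt_0_compat; auto using poch_fact_pos, pow_lt).
  assert (Hu : forall j l, 0 <= u j l).
  { intros j l. unfold u. left. apply Rmult_lt_0_compat; auto.
    apply Rmult_lt_0_compat; [apply Rmult_lt_0_compat|]; auto using poch_fact_pos, pow_lt. }
  assert (Hdiag : is_series (fun n => sum_f_R0 (fun k => u k (n - k)%nat) n) (fser fs (s + d) x)).
  { apply (is_series_ext_R (fterm fs (s + d) x)); [|apply Series_correct; auto].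
    intros n. rewrite fterm_eq.
    rewrite (sum_eq _ (fun k => (poch_fact d k * poch_fact s (n - k)) * (fs n * x ^ n))).
    - rewrite <- scal_sum, poch_fact_Vandermonde, Rplus_comm. ring.
    - intros k Hk. unfold u. replace (k + (n - k))%nat with n by lia.
      replace (x ^ n) with (x ^ k * x ^ (n - k)) by (rewrite <- pow_add; f_equal; lia). ring. }
  destruct (is_series_rows_of_antidiagonals u _ Hu Hdiag) as [Hrows Hsum].
  split.
  - intros j. apply (ex_series_ext_R (fun l => / (poch_fact d j * x ^ j) * u j l)).
    + intros l. unfold u. specialize (Hcoef j). rewrite <- Rmult_assoc, Rinv_l, Rmult_1_l; lra.
    + exact (ex_series_scal_l (V := R_NormedModule) _ _ (Hrows j)).
  - apply (is_series_ext_R (fun j => Series (u j))); auto.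
    intros j. unfold u, fser_shifted. apply Series_scal_l.
Qed.

End PositiveCoefficients.

(** * The two inequalities *)

Section UpperBound.

Variable fs : nat -> R.
Hypothesis fs_pos : forall n, 0 < fs n.
Hypothesis fs_ratio_decr : forall n, fs (S (S n)) / fs (S n) < fs (S n) / fs n.

Lemma fs_shift_ratio_decr j l : fs (S j + S l)%nat / fs (S l) < fs (S j + l)%nat / fs l.
Proof.
  induction j as [|j IH]; [apply fs_ratio_decr|].
  replace (S (S j) + S l)%nat with (S (S (S j + l))) by lia.
  replace (S (S j) + l)%nat with (S (S j + l)) by lia.
  replace (S j + S l)%nat with (S (S j + l)) in IH by lia.
  set (m := (S j + l)%nat) in *.
  replace (fs (S (S m)) / fs (S l)) with (fs (S (S m)) / fs (S m) * (fs (S m) / fs (S l)))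
    by (generalize (fs_pos (S m)) (fs_pos (S l)); intros; field; lra).
  replace (fs (S m) / fs l) with (fs (S m) / fs m * (fs m / fs l))
    by (generalize (fs_pos m) (fs_pos l); intros; field; lra).
  apply Rmult_gt_0_lt_compat; auto.
  - apply Rdiv_lt_0_compat; auto.
  - apply Rdiv_lt_0_compat; auto.
Qed.

Variables (a b x : R).
Hypotheses (Ha : 0 < a) (Hab : a < b) (Hx : 0 < x).
Hypotheses (Ea : ex_series (fterm fs a x)) (Eb : ex_series (fterm fs b x)).

Lemma fser_shifted_cross_lt j :
  ex_series (fun l => fs (S j + l)%nat * poch_fact a l * x ^ l) ->
  ex_series (fun l => fs (S j + l)%nat * poch_fact b l * x ^ l) ->
  fser_shifted fs b x (S j) * fser fs a x < fser_shifted fs a x (S j) * fser fs b x.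
Proof.
  intros Ra Rb.
  set (w := fterm fs a x). set (r := fun n => poch b n / poch a n).
  set (p := fun l => - (fs (S j + l)%nat / fs l)).
  assert (Ewr : forall n, w n * r n = fterm fs b x n) by (intros; apply fterm_poch_ratio; auto).
  assert (Ewp : forall n, w n * p n = - (fs (S j + n)%nat * poch_fact a n * x ^ n)).
  { intros n. unfold w, p. rewrite fterm_eq. generalize (fs_pos n). intros. field. lra. }
  assert (Ewrp : forall n, w n * r n * p n = - (fs (S j + n)%nat * poch_fact b n * x ^ n)).
  { intros n. rewrite Ewr. unfold p. rewrite fterm_eq. generalize (fs_pos n). intros. field. lra. }
  assert (Hcheb := Chebyshev_sum_lt w r p).
  rewrite (Series_ext _ _ Ewr), (Series_ext _ _ Ewp), (Series_ext _ _ Ewrp), !Series_opp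
    in Hcheb.
  fold (fser_shifted fs a x (S j)) (fser_shifted fs b x (S j)) in Hcheb.
  assert (- fser_shifted fs a x (S j) * fser fs b x < - fser_shifted fs b x (S j) * fser fs a x);
    [|lra].
  apply Hcheb; auto.
  - intros; apply fterm_pos; auto.
  - intros; apply poch_ratio_lt_succ; auto.
  - intros n. unfold p. generalize (fs_shift_ratio_decr j n). lra.
  - apply (ex_series_ext_R (fterm fs b x)); auto.
  - apply (ex_series_ext_R (fun n => -1 * (fs (S j + n)%nat * poch_fact a n * x ^ n))).
    + intros; rewrite Ewp; ring.
    + exact (ex_series_scal_l (V := R_NormedModule) _ _ Ra).
  - apply (ex_series_ext_R (fun n => -1 * (fs (S j + n)%nat * poch_fact b n * x ^ n))).
    + intros; rewrite Ewrp; ring.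
    + exact (ex_series_scal_l (V := R_NormedModule) _ _ Rb).
Qed.

Lemma fser_cross_lt_upper d : 0 < d ->
  ex_series (fterm fs (a + d) x) -> ex_series (fterm fs (b + d) x) ->
  fser fs (b + d) x * fser fs a x < fser fs (a + d) x * fser fs b x.
Proof.
  intros Hd Ead Ebd.
  destruct (is_series_fser_add fs fs_pos a d x Ha Hd Hx Ead) as [Ra Sa].
  destruct (is_series_fser_add fs fs_pos b d x ltac:(lra) Hd Hx Ebd) as [Rb Sb].
  rewrite <- (is_series_unique _ _ Sa), <- (is_series_unique _ _ Sb), <- !Series_scal_r.
  assert (Hcoef : forall j, 0 < poch_fact d j * x ^ j)
    by (intros; apply Rmult_lt_0_compat; auto using poch_fact_pos, pow_lt).
  apply (Series_lt _ _ 1).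
  - intros [|j].
    + rewrite !fser_shifted_0. lra.
    + generalize (fser_shifted_cross_lt j (Ra (S j)) (Rb (S j)) ) (Hcoef (S j)). nra.
  - generalize (fser_shifted_cross_lt 0 (Ra 1%nat) (Rb 1%nat)) (Hcoef 1%nat). nra.
  - apply (ex_series_ext_R
             (fun j => fser fs a x * (poch_fact d j * x ^ j * fser_shifted fs b x j))).
    + intros; ring.
    + apply (ex_series_scal_l (V := R_NormedModule)). eexists; eauto.
  - apply (ex_series_ext_R
             (fun j => fser fs b x * (poch_fact d j * x ^ j * fser_shifted fs a x j))).
    + intros; ring.
    + apply (ex_series_scal_l (V := R_NormedModule)). eexists; eauto.
Qed.

End UpperBound.

Definition Gamma_ratio (d s : R) : R := Gamma (s + d) / Gamma s.

Section GammaRatio.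

Variable d : R.
Hypothesis Hd : 0 < d.

Lemma Gamma_ratio_pos s : 0 < s -> 0 < Gamma_ratio d s.
Proof. intros Hs. apply Rdiv_lt_0_compat; apply Gamma_pos; lra. Qed.

Lemma Gamma_ratio_lt_succ s : 0 < s -> Gamma_ratio d s < Gamma_ratio d (s + 1).
Proof.
  intros Hs. unfold Gamma_ratio. replace (s + 1 + d) with (s + d + 1) by ring.
  rewrite !Gamma_succ by lra.
  generalize (Gamma_pos s Hs) (Gamma_pos (s + d) ltac:(lra)). intros Gs Gsd.
  apply Rmult_lt_reg_r with (s * Gamma s); [nra|].
  replace ((s + d) * Gamma (s + d) / (s * Gamma s) * (s * Gamma s)) with ((s + d) * Gamma (s + d))
    by (field; lra).
  replace (Gamma (s + d) / Gamma s * (s * Gamma s)) with (s * Gamma (s + d)) by (field; lra).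
  nra.
Qed.

Lemma Gamma_ratio_le s t : 0 < s -> s <= t -> Gamma_ratio d s <= Gamma_ratio d t.
Proof.
  intros Hs Hst. unfold Gamma_ratio.
  generalize (Gamma_shift_le s t d Hs Hst Hd) (Gamma_pos s Hs) (Gamma_pos t ltac:(lra)). intros.
  apply Rmult_le_reg_r with (Gamma s * Gamma t); [nra|].
  replace (Gamma (s + d) / Gamma s * (Gamma s * Gamma t)) with (Gamma (s + d) * Gamma t)
    by (field; lra).
  replace (Gamma (t + d) / Gamma t * (Gamma s * Gamma t)) with (Gamma (t + d) * Gamma s)
    by (field; lra).
  auto.
Qed.

Lemma fterm_Gamma_ratio fs s x n : 0 < s ->
  fterm fs s x n * Gamma_ratio d (s + INR n) = Gamma_ratio d s * fterm fs (s + d) x n.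
Proof.
  intros Hs. unfold fterm, Gamma_ratio. generalize (pos_INR n). intros Hn.
  replace (s + INR n + d) with (s + d + INR n) by ring.
  rewrite (Gamma_poch (s + d)), (Gamma_poch s) by lra.
  generalize (poch_pos s n Hs) (Gamma_pos s Hs) (INR_fact_lt_0 n). intros. field. lra.
Qed.

Lemma fterm_Gamma_ratio_le fs s t x n : (forall n, 0 < fs n) -> 0 < s -> s <= t -> 0 < x ->
  fterm fs t x n * Gamma_ratio d (s + INR n) <= Gamma_ratio d t * fterm fs (t + d) x n.
Proof.
  intros Hf Hs Hst Hx. rewrite <- fterm_Gamma_ratio by lra.
  generalize (pos_INR n). intros Hn.
  apply Rmult_le_compat_l; [left; apply fterm_pos; auto; lra|].
  apply Gamma_ratio_le; lra.
Qed.

End GammaRatio.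

Lemma Gamma_ratio_quot d a b : 0 < a -> 0 < b -> 0 < d ->
  Gamma (a + d) * Gamma b / (Gamma (b + d) * Gamma a) = Gamma_ratio d a / Gamma_ratio d b.
Proof.
  intros Ha Hb Hd. unfold Gamma_ratio.
  generalize (Gamma_pos a Ha) (Gamma_pos b Hb) (Gamma_pos (b + d) ltac:(lra)). intros.
  field. lra.
Qed.

Lemma fser_cross_lt_lower fs a b d x : (forall n, 0 < fs n) ->
  0 < a -> a < b -> 0 < d -> 0 < x ->
  ex_series (fterm fs a x) -> ex_series (fterm fs b x) ->
  ex_series (fterm fs (a + d) x) -> ex_series (fterm fs (b + d) x) ->
  Gamma_ratio d a * fser fs (a + d) x * fser fs b x
  < Gamma_ratio d b * fser fs (b + d) x * fser fs a x.
Proof.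
  intros Hf Ha Hab Hd Hx Ea Eb Ead Ebd.
  set (w := fterm fs a x). set (r := fun n => poch b n / poch a n).
  set (p := fun n => Gamma_ratio d (a + INR n)).
  assert (Ewr : forall n, w n * r n = fterm fs b x n) by (intros; apply fterm_poch_ratio; auto).
  assert (Ewp : forall n, w n * p n = Gamma_ratio d a * fterm fs (a + d) x n)
    by (intros n; exact (fterm_Gamma_ratio d Hd fs a x n Ha)).
  assert (Ewrp : forall n, 0 <= w n * r n * p n <= Gamma_ratio d b * fterm fs (b + d) x n).
  { intros n. rewrite Ewr. unfold p. split.
    - left. apply Rmult_lt_0_compat; [apply fterm_pos; auto; lra|].
      apply Gamma_ratio_pos; auto. generalize (pos_INR n). lra.
    - apply fterm_Gamma_ratio_le; auto; lra. }
  assert (EbdS : ex_series (fun n => Gamma_ratio d b * fterm fs (b + d) x n))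
    by exact (ex_series_scal_l (V := R_NormedModule) _ _ Ebd).
  assert (Hbd : Series (fun n => w n * r n * p n) <= Gamma_ratio d b * fser fs (b + d) x)
    by (unfold fser; rewrite <- Series_scal_l; apply Series_le; auto).
  assert (Hcheb : Series (fun n => w n * p n) * Series (fun n => w n * r n)
                  < Series (fun n => w n * r n * p n) * Series w).
  { apply Chebyshev_sum_lt; auto.
    - intros; apply fterm_pos; auto.
    - intros; apply poch_ratio_lt_succ; auto.
    - intros n. unfold p. rewrite S_INR, <- Rplus_assoc.
      apply (Gamma_ratio_lt_succ d Hd). generalize (pos_INR n). lra.
    - apply (ex_series_ext_R (fterm fs b x)); auto.
    - apply (ex_series_ext_R (fun n => Gamma_ratio d a * fterm fs (a + d) x n)); auto.
      exact (ex_series_scal_l (V := R_NormedModule) _ _ Ead).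
    - exact (ex_series_le_nonneg _ _ Ewrp EbdS). }
  rewrite (Series_ext _ _ Ewr), (Series_ext _ _ Ewp), Series_scal_l in Hcheb.
  assert (Hfa := fser_pos fs Hf a x Ha Hx Ea).
  apply Rmult_le_compat_r with (r := fser fs a x) in Hbd; [|lra].
  unfold fser, w in *. lra.
Qed.

Theorem corollary1 (fs : nat -> R) (a b delta x : R) :
  (forall n, 0 < fs n) ->
  (forall n, (1 <= n)%nat -> fs (S n) / fs n < fs n / fs (n - 1)%nat) ->
  0 < a -> a < b -> 0 < delta -> 0 < x ->
  ex_series (fterm fs a x) ->
  ex_series (fterm fs b x) ->
  ex_series (fterm fs (a + delta) x) ->
  ex_series (fterm fs (b + delta) x) ->
  Gamma (a + delta) * Gamma b / (Gamma (b + delta) * Gamma a)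
    < fser fs (b + delta) x * fser fs a x / (fser fs (a + delta) x * fser fs b x)
  /\ fser fs (b + delta) x * fser fs a x / (fser fs (a + delta) x * fser fs b x) < 1.
Proof.
  intros Hf Hdec Ha Hab Hd Hx Ea Eb Ead Ebd.
  assert (Hratio : forall n, fs (S (S n)) / fs (S n) < fs (S n) / fs n).
  { intros n. generalize (Hdec (S n) ltac:(lia)). replace (S n - 1)%nat with n by lia. auto. }
  assert (Hupper := fser_cross_lt_upper fs Hf Hratio a b x Ha Hab Hx Ea Eb delta Hd Ead Ebd).
  assert (Hlower := fser_cross_lt_lower fs a b delta x Hf Ha Hab Hd Hx Ea Eb Ead Ebd).
  assert (Fad := fser_pos fs Hf (a + delta) x ltac:(lra) Hx Ead).
  assert (Fb := fser_pos fs Hf b x ltac:(lra) Hx Eb).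
  split.
  - rewrite Gamma_ratio_quot by lra.
    apply Rdiv_lt_cross; [apply Gamma_ratio_pos; lra | nra | lra].
  - apply Rlt_div_l; [nra | lra].
Qed.
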